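(* Let $q$ be a prime power, $m\ge1$, $s\ge1$ and $0\le d<sq$. Let $S=\{\mathbf{j}\in\mathbb{N}^m: |\mathbf{j}|<s\}$ and for $\mathbf{j}\in S$ let $d_{\mathbf{j}}=\min(m(q-1),d-|\mathbf{j}|q)$. Fix an enumeration $\mathbb{F}_q=\{\alpha_0,\dots,\alpha_{q-1}\}$ and for an integer $e$ put $$\mathcal{I}_e=\{(\alpha_{i_1},\dots,\alpha_{i_m}) : 0\le i_l\le q-1 \ (1\le l\le m),\ \textstyle\sum_{l} i_l\le e\}\subset\mathbb{F}_q^m$$ (empty if $e<0$). Then $$\mathcal{I}=\{(\mathbf{j},\mathbf{P}) : \mathbf{j}\in S,\ \mathbf{P}\in\mathcal{I}_{d_{\mathbf{j}}}\}\subset S\times\mathbb{F}_q^m$$ is an information set of the multiplicity code $\mathrm{Mult}^s_d$, i.e. the map $\mathrm{Mult}^s_d\to\mathbb{F}_q^{\mathcal{I}}$, $c\mapsto (c_{\mathbf{j},\mathbf{P}})_{(\mathbf{j},\mathbf{P})\in\mathcal{I}}$, is a bijection. In particular $|\mathcal{I}|=\binom{m+d}{m}$.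
   Context: For $F\in\mathbb{F}_q[X_1,\dots,X_m]$ and $\mathbf{i}\in\mathbb{N}^m$, the Hasse derivative $H(F,\mathbf{i})$ is the coefficient of $\mathbf{Z}^{\mathbf{i}}$ in $F(\mathbf{X}+\mathbf{Z})\in\mathbb{F}_q[\mathbf{X},\mathbf{Z}]$. The multiplicity code $\mathrm{Mult}^s_d$ is the set of all words $c=(c_{\mathbf{j},\mathbf{P}})_{\mathbf{j}\in S,\ \mathbf{P}\in\mathbb{F}_q^m}$ with $c_{\mathbf{j},\mathbf{P}}=H(F,\mathbf{j})(\mathbf{P})$, as $F$ ranges over polynomials in $\mathbb{F}_q[X_1,\dots,X_m]$ of total degree at most $d$; it is an $\mathbb{F}_q$-linear space. $|\mathbf{j}|$ denotes the sum of the coordinates of $\mathbf{j}$. *)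

From HB Require Import structures.
From mathcomp Require Import all_boot all_order all_algebra all_field.
Set Implicit Arguments. Unset Strict Implicit. Unset Printing Implicit Defensive.
Import Order.TTheory GRing.Theory Num.Theory.
Local Open Scope ring_scope.

Definition point (F : finFieldType) (m : nat) := {ffun 'I_m -> F}.

(* Exponent vectors with every entry <= d; a polynomial of total degree <= d
   is given by its coefficients on the exponent vectors of total degree <= d. *)
Definition mono (m d : nat) := {ffun 'I_m -> 'I_d.+1}.
Definition mdeg (m d : nat) (e : mono m d) : nat := (\sum_(l < m) (e l : nat))%N.

Definition Sidx (m s : nat) :=
  {j : {ffun 'I_m -> 'I_s} | (\sum_(l < m) (j l : nat) < s)%N}.
Definition jabs (m s : nat) (j : Sidx m s) : nat := (\sum_(l < m) (val j l : nat))%N.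

(* Hasse derivative H(F, j) evaluated at P, for F = \sum_e c_e X^e:
   coefficient of Z^j in F(X+Z) is \sum_e c_e \prod_l binom(e_l, j_l) X_l^(e_l - j_l). *)
Definition hasse_eval (F : finFieldType) (m d : nat) (c : {ffun mono m d -> F})
  (j : 'I_m -> nat) (P : point F m) : F :=
  \sum_(e : mono m d | (mdeg e <= d)%N)
     c e * \prod_(l < m) ((binomial (e l) (j l))%:R * P l ^+ (e l - j l)%N).

Definition word (F : finFieldType) (m s : nat) := {ffun Sidx m s * point F m -> F}.

Definition mult_enc (F : finFieldType) (m s d : nat) (c : {ffun mono m d -> F})
  : word F m s :=
  [ffun jP : Sidx m s * point F m => hasse_eval c (fun l => (val jP.1 l : nat)) jP.2].

Definition MultCode (F : finFieldType) (m s d : nat) : {set word F m s} :=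
  [set mult_enc s c | c : {ffun mono m d -> F}].

Definition dj (F : finFieldType) (m s d : nat) (j : Sidx m s) : int :=
  Num.min ((m * (#|F| - 1))%N%:Z) (d%:Z - (jabs j * #|F|)%N%:Z).

Definition Ie (F : finFieldType) (m : nat) (alpha : 'I_#|F| -> F) (e : int)
  : {set point F m} :=
  [set P | [exists i : {ffun 'I_m -> 'I_#|F|},
             ((\sum_(l < m) (i l : nat))%N%:Z <= e) && (P == [ffun l => alpha (i l)])]].

Definition infoSet (F : finFieldType) (m s d : nat) (alpha : 'I_#|F| -> F)
  : {set Sidx m s * point F m} :=
  [set jP : Sidx m s * point F m | jP.2 \in Ie m alpha (@dj F m s d jP.1)].

From HB Require Import structures.
From mathcomp Require Import all_boot all_order all_algebra all_field.
From mathcomp Require Import zify.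
Import Order.TTheory GRing.Theory Num.Theory.
Local Open Scope ring_scope.
Set Implicit Arguments. Unset Strict Implicit. Unset Printing Implicit Defensive.

(* Write each exponent vector k of total degree at most d as k_l = q j_l + i_l
   with i_l < q.  The coordinate (j, (alpha_(i_1), ..., alpha_(i_m))) of I is
   the "sample" of k, and k |-> (j, P) is a bijection from these exponents onto
   I, whence |I| = C(m + d, m).  Test the samples on the basis of products
   B_(k_1)(X_1) ... B_(k_m)(X_m), where B_n = prod_(t < n) (X - alpha_(t mod q)):
   alpha_i is a root of B_n of multiplicity #{t < n | t = i mod q}, so the j-th
   Hasse derivative of B_n at alpha_i vanishes when j q + i < n and not when
   j q + i = n.  The sampling matrix is therefore triangular for the
   componentwise order on exponents, with nonzero diagonal, and restriction to I
   is a bijection. *)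

Section TaylorShift.

Variable R : comNzRingType.

Lemma coef_XaddC_exp (x : R) i j :
  (('X + x%:P) ^+ i)`_j = x ^+ (i - j) *+ 'C(i, j).
Proof.
elim: i j => [|i IH] [|j].
- by rewrite expr0 coef1 /= bin0.
- by rewrite expr0 coef1 /= bin0n.
- by rewrite exprSr mulrDr coefD coefMX /= coefMC IH add0r !subn0 !bin0 !mulr1n exprSr.
- rewrite exprSr mulrDr coefD coefMX /= coefMC !IH binS mulrnDr subSS.
  have [lt_ij|le_ji] := ltnP i j.
    by rewrite !bin_small ?mulr0n ?mul0r ?addr0 // ltnW.
  rewrite addrC; congr (_ + _).
  have [->|neq_ji] := eqVneq j i; first by rewrite bin_small // !mulr0n mul0r.
  by rewrite mulrnAl -exprSr subnS prednK // subn_gt0 ltn_neqAle neq_ji.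
Qed.

Lemma coef_comp_XaddC (p : {poly R}) x j N : (size p <= N)%N ->
  \sum_(i < N) p`_i * ('C(i, j)%:R * x ^+ (i - j)) = (p \Po ('X + x%:P))`_j.
Proof.
move=> le_pN; rewrite comp_polyE coef_sum.
rewrite (big_ord_widen N (fun i => (p`_i *: ('X + x%:P) ^+ i)`_j) le_pN) /=.
rewrite [RHS]big_mkcond; apply: eq_bigr => i _; case: ifP => lt_ip.
  by rewrite coefZ coef_XaddC_exp mulr_natl.
by rewrite nth_default ?mul0r // leqNgt lt_ip.
Qed.

End TaylorShift.

Definition residue_count (q i n : nat) : nat := (\sum_(0 <= t < n | t %% q == i) 1)%N.

Lemma residue_count_mulD q i j : (i < q)%N -> residue_count q i (j * q + i) = j.
Proof.
move=> lt_iq; rewrite /residue_count (@big_cat_nat _ _ _ (j * q)) ?leq_addr //=.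
rewrite [X in (_ + X)%N]big1_seq ?addn0; last first.
  move=> t /andP[/eqP t_i]; rewrite mem_index_iota => /andP[le_jt lt_t].
  by move: t_i; rewrite -(subnKC le_jt) modnMDl modn_small; lia.
elim: j => [|j IH]; first by rewrite mul0n big_geq.
rewrite mulSnr (@big_cat_nat _ _ _ (j * q)) ?leq_addr //= IH.
rewrite -{1}(add0n (j * q)%N) big_addn addKn big_mkord.
rewrite (eq_bigl (pred1 (Ordinal lt_iq))) ?big_pred1_eq ?addn1 // => u.
by rewrite /= addnC modnMDl modn_small.
Qed.

Lemma leq_residue_count q i n1 n2 :
  (n1 <= n2)%N -> (residue_count q i n1 <= residue_count q i n2)%N.
Proof. by move=> le_n12; rewrite /residue_count (@big_cat_nat _ _ _ n1 0 n2) //= leq_addr. Qed.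

Lemma residue_count_gt q i j n :
  (i < q)%N -> (j * q + i < n)%N -> (j < residue_count q i n)%N.
Proof.
move=> lt_iq lt_n; apply: leq_trans (leq_residue_count q i lt_n).
rewrite /residue_count big_mkcond big_nat_recr //= -big_mkcond.
by rewrite -/(residue_count q i _) residue_count_mulD // modnMDl modn_small // eqxx addn1.
Qed.

Section NodalPolynomial.

Variables (R : idomainType) (q : nat) (q_gt0 : (0 < q)%N) (alpha : 'I_q -> R).

Definition modq (t : nat) : 'I_q := Ordinal (ltn_pmod t q_gt0).

Definition nodal (n : nat) : {poly R} := \prod_(0 <= t < n) ('X - (alpha (modq t))%:P).

Lemma size_nodal n : size (nodal n) = n.+1.
Proof.
rewrite /nodal -(big_map (fun t => alpha (modq t)) xpredT (fun x => 'X - x%:P)).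
by rewrite size_prod_XsubC size_map size_iota subn0.
Qed.

Lemma nodal_comp_XaddC (i : 'I_q) n :
  nodal n \Po ('X + (alpha i)%:P) =
  'X^(residue_count q i n) *
    \prod_(0 <= t < n | (t %% q)%N != i) ('X + (alpha i - alpha (modq t))%:P).
Proof.
rewrite /nodal (big_morph _ (fun p r => comp_polyM p r _) (comp_polyC 1 _)).
rewrite (bigID (fun t => (t %% q)%N == i)) /=; congr (_ * _); last first.
  by apply: eq_bigr => t _; rewrite comp_polyB comp_polyX comp_polyC polyCB addrA.
rewrite /residue_count (big_morph _ (exprD 'X) (expr0 'X)).
apply: eq_bigr => t /eqP t_i; have -> : modq t = i by apply: val_inj.
by rewrite comp_polyB comp_polyX comp_polyC addrK expr1.
Qed.

Lemma coef_nodal_comp_eq0 n n' : (n' < n)%N ->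
  (nodal n \Po ('X + (alpha (modq n'))%:P))`_(n' %/ q) = 0.
Proof.
move=> lt_n'n; rewrite nodal_comp_XaddC coefXnM ifT //.
by apply: residue_count_gt; rewrite ?ltn_pmod // -divn_eq.
Qed.

Lemma coef_nodal_comp_neq0 n : injective alpha ->
  (nodal n \Po ('X + (alpha (modq n))%:P))`_(n %/ q) != 0.
Proof.
move=> alpha_inj; rewrite nodal_comp_XaddC coefXnM.
have -> : residue_count q (modq n) n = (n %/ q)%N.
  by have := residue_count_mulD (n %/ q) (ltn_pmod n q_gt0); rewrite -divn_eq.
rewrite ltnn subnn -horner_coef0 horner_prod prodf_seq_neq0.
apply/allP => t _; apply/implyP => t_n.
by rewrite !hornerE subr_eq0; apply: contra t_n => /eqP/alpha_inj ->.
Qed.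

End NodalPolynomial.

Lemma triangular_inj (R : idomainType) (T : finType) (A : {pred T}) (rank : T -> nat)
    (M : T -> T -> R) (a1 a2 : T -> R) :
  {in A, forall k, M k k != 0} ->
  {in A &, forall k' k, k != k' -> M k' k != 0 -> (rank k < rank k')%N} ->
  {in A, forall k', \sum_(k in A) a1 k * M k' k = \sum_(k in A) a2 k * M k' k} ->
  {in A, a1 =1 a2}.
Proof.
move=> M_diag M_triangular eq_a.
suff ind N k : k \in A -> (rank k < N)%N -> a1 k = a2 k by move=> k kA; apply: ind kA _.
elim: N k => // N IH k kA lt_kN.
have := eq_a k kA; rewrite (bigD1 k) //= [RHS](bigD1 k) //=.
rewrite (eq_bigr (fun k2 => a2 k2 * M k k2)) => [/addIr/eqP|k2 /andP[k2A neq_k2k]].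
  by rewrite -subr_eq0 -mulrBl mulf_eq0 (negbTE (M_diag k kA)) orbF subr_eq0 => /eqP.
have [->|M_neq0] := eqVneq (M k k2) 0; first by rewrite !mulr0.
by rewrite IH // (leq_trans (M_triangular k k2 kA k2A neq_k2k M_neq0)).
Qed.

Lemma card_finField_gt0 (F : finFieldType) : (0 < #|F|)%N.
Proof. by apply/card_gt0P; exists 0. Qed.

Definition monos_le (m d : nat) : {set mono m d} := [set e | (mdeg e <= d)%N].

Lemma card_monos_le m d : #|monos_le m d| = 'C(m + d, m).
Proof.
rewrite -card_partial_ord_partitions.
pose of_tuple (t : m.-tuple 'I_d.+1) : mono m d := [ffun l => tnth t l].
have of_tuple_inj : injective of_tuple.
  by move=> t1 t2 /ffunP eq_t; apply: eq_from_tnth => l; have := eq_t l; rewrite !ffunE.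
rewrite -(card_imset _ of_tuple_inj); apply: eq_card => e; rewrite inE.
apply/idP/imsetP => [e_le|[t]].
  exists [tuple e l | l < m]; last by apply/ffunP => l; rewrite ffunE tnth_mktuple.
  by rewrite inE big_tuple; under eq_bigr => l _ do rewrite tnth_mktuple.
by rewrite inE big_tuple => t_le ->; rewrite /mdeg; under eq_bigr => l _ do rewrite ffunE.
Qed.

Lemma mdeg_lt m d (k k' : mono m d) :
  (forall l, k l <= k' l)%N -> k != k' -> (mdeg k < mdeg k')%N.
Proof.
move=> le_kk' neq_kk'.
have [l neq_l] : exists l, k l != k' l.
  apply/existsP; apply: contraR neq_kk' => /existsPn eq_kk'.
  by apply/eqP/ffunP => l; apply/eqP/negPn.
rewrite /mdeg (bigD1 l) //= [X in (_ < X)%N](bigD1 l) //= -addSn.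
by apply: leq_add; [rewrite ltn_neqAle neq_l le_kk' | apply: leq_sum].
Qed.

Lemma eq_hasse_eval (F : finFieldType) m d (c1 c2 : {ffun mono m d -> F}) j P :
  {in monos_le m d, c1 =1 c2} -> hasse_eval c1 j P = hasse_eval c2 j P.
Proof. by move=> eq_c; apply: eq_bigr => e e_le; rewrite eq_c // inE. Qed.

Lemma hasse_eval_sum (F : finFieldType) m d (I : finType) (A : {pred I}) (a : I -> F)
    (c : I -> {ffun mono m d -> F}) j P :
  hasse_eval [ffun e => \sum_(i in A) a i * c i e] j P =
  \sum_(i in A) a i * hasse_eval (c i) j P.
Proof.
rewrite /hasse_eval; under eq_bigr do rewrite ffunE mulr_suml.
rewrite exchange_big; apply: eq_bigr => i _; rewrite mulr_sumr.
by apply: eq_bigr => e _; rewrite mulrA.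
Qed.

Lemma hasse_eval_prod (F : finFieldType) m d (p : 'I_m -> {poly F}) j (P : point F m) :
  (\sum_(l < m) (size (p l)).-1 <= d)%N ->
  hasse_eval [ffun e : mono m d => \prod_(l < m) (p l)`_(e l)] j P =
  \prod_(l < m) (p l \Po ('X + (P l)%:P))`_(j l).
Proof.
move=> deg_p; rewrite /hasse_eval big_mkcond /=.
under eq_bigr => e _.
  rewrite (_ : (if _ then _ else _) = \prod_(l < m) ((p l)`_(e l) *
                 ('C(e l, j l)%:R * P l ^+ (e l - j l)))); first over.
  rewrite ffunE -big_split; case: ifP => // /negbT gt_ed.
  have [l le_pe] : exists l, (size (p l) <= e l)%N.
    apply/existsP; apply: contraR gt_ed => /existsPn lt_ep.
    by apply: leq_trans deg_p; apply: leq_sum => l _; have := lt_ep l; lia.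
  by rewrite (bigD1 l) //= nth_default ?mul0r.
rewrite -(bigA_distr_bigA (fun l (i : 'I_d.+1) =>
                          (p l)`_i * ('C(i, j l)%:R * P l ^+ (i - j l)))).
apply: eq_bigr => l _; apply: coef_comp_XaddC.
apply: leq_trans (leqSpred _) _; rewrite ltnS (leq_trans _ deg_p) //.
by rewrite (bigD1 l) //= leq_addr.
Qed.

Section Sampling.

Variables (F : finFieldType) (m d : nat) (alpha : 'I_#|F| -> F).

Local Notation modq := (modq (card_finField_gt0 F)).
Local Notation nodal := (nodal (card_finField_gt0 F) alpha).
Local Notation monos_le := (monos_le m d).

Definition sample_point (k : mono m d) : point F m := [ffun l => alpha (modq (k l))].

Definition sample (c : {ffun mono m d -> F}) (k : mono m d) : F :=
  hasse_eval c (fun l => k l %/ #|F|)%N (sample_point k).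

Definition nodal_coefs (k : mono m d) : {ffun mono m d -> F} :=
  [ffun e : mono m d => \prod_(l < m) (nodal (k l))`_(e l)].

Lemma sample_nodal_coefs (k k' : mono m d) : k \in monos_le ->
  sample (nodal_coefs k) k' =
  \prod_(l < m) (nodal (k l) \Po ('X + (alpha (modq (k' l)))%:P))`_(k' l %/ #|F|).
Proof.
rewrite inE => k_le; rewrite /sample hasse_eval_prod.
  by apply: eq_bigr => l _; rewrite /sample_point ffunE.
by under eq_bigr => l _ do rewrite /= size_nodal.
Qed.

Lemma sample_nodal_coefs_eq0 (k k' : mono m d) l : k \in monos_le -> (k' l < k l)%N ->
  sample (nodal_coefs k) k' = 0.
Proof.
move=> k_le lt_l.
by rewrite sample_nodal_coefs // (bigD1 l) //= coef_nodal_comp_eq0 ?mul0r.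
Qed.

Lemma sample_nodal_coefs_neq0 (k : mono m d) : injective alpha -> k \in monos_le ->
  sample (nodal_coefs k) k != 0.
Proof.
move=> alpha_inj k_le; rewrite sample_nodal_coefs //.
by apply/prodf_neq0 => l _; apply: coef_nodal_comp_neq0.
Qed.

(* Both maps are extended by the identity off [monos_le], so that they become
   endomaps of the finite type [{ffun mono m d -> F}]. *)
Definition sample_ext (c : {ffun mono m d -> F}) : {ffun mono m d -> F} :=
  [ffun k => if k \in monos_le then sample c k else c k].

Definition nodal_comb (a : {ffun mono m d -> F}) : {ffun mono m d -> F} :=
  [ffun e : mono m d =>
     if e \in monos_le then \sum_(k in monos_le) a k * nodal_coefs k e else a e].

Lemma sample_nodal_comb a (k' : mono m d) :
  sample (nodal_comb a) k' = \sum_(k in monos_le) a k * sample (nodal_coefs k) k'.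
Proof.
rewrite /sample -hasse_eval_sum; apply: eq_hasse_eval => e e_le.
by rewrite !ffunE e_le.
Qed.

Hypothesis alpha_inj : injective alpha.

Lemma sample_ext_nodal_comb_inj : injective (sample_ext \o nodal_comb).
Proof.
move=> a1 a2 /ffunP /= eq_a; apply/ffunP => k.
have [k_le|k_gt] := boolP (k \in monos_le); last first.
  by have := eq_a k; rewrite !ffunE (negbTE k_gt).
apply: (triangular_inj (rank := @mdeg m d)
                       (M := fun k' k => sample (nodal_coefs k) k')) k_le.
- by move=> k0; apply: sample_nodal_coefs_neq0.
- move=> k' k0 _ k0_le neq_k M_neq0; apply: mdeg_lt neq_k => l.
  by rewrite leqNgt; apply: contra M_neq0 => lt_l; rewrite (sample_nodal_coefs_eq0 k0_le lt_l).
- by move=> k' k'_le; have := eq_a k'; rewrite !ffunE k'_le !sample_nodal_comb.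
Qed.

Lemma sample_ext_bij : bijective sample_ext.
Proof.
have sample_extK : cancel (nodal_comb \o invF sample_ext_nodal_comb_inj) sample_ext.
  exact: (f_invF sample_ext_nodal_comb_inj).
by exists (nodal_comb \o invF sample_ext_nodal_comb_inj); first exact: canF_sym.
Qed.

Lemma sample_inj c1 c2 :
  {in monos_le, sample c1 =1 sample c2} -> {in monos_le, c1 =1 c2}.
Proof.
move=> eq_s.
pose trunc (c : {ffun mono m d -> F}) := [ffun e => if e \in monos_le then c e else 0].
have sample_trunc c (k : mono m d) : sample (trunc c) k = sample c k.
  by apply: eq_hasse_eval => e e_le; rewrite ffunE e_le.
have /(bij_inj sample_ext_bij)/ffunP eq_t : sample_ext (trunc c1) = sample_ext (trunc c2).
  apply/ffunP => k; rewrite !ffunE; case: ifP => k_le; last by rewrite k_le.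
  by rewrite !sample_trunc eq_s.
by move=> e e_le; have := eq_t e; rewrite !ffunE e_le.
Qed.

Lemma sample_surj (t : mono m d -> F) : exists c, {in monos_le, sample c =1 t}.
Proof.
have [g _ gK] := sample_ext_bij; exists (g [ffun k => t k]) => k k_le.
by have /ffunP/(_ k) := gK [ffun k => t k]; rewrite !ffunE k_le.
Qed.

End Sampling.

Section InformationSet.

Variables (F : finFieldType) (m s d : nat) (alpha : 'I_#|F| -> F).
Hypothesis d_lt : (d < s.+1 * #|F|)%N.

Local Notation modq := (modq (card_finField_gt0 F)).
Local Notation monos_le := (monos_le m d).

Definition Sidx0 : Sidx m s.+1.
Proof. by exists [ffun => ord0]; rewrite big1 // => l _; rewrite ffunE. Defined.

(* The default [Sidx0] is never used on [monos_le], by [sum_div_lt]. *)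
Definition info_order (k : mono m d) : Sidx m s.+1 :=
  insubd Sidx0 [ffun l => inord (k l %/ #|F|)].

Definition info_emb (k : mono m d) : Sidx m s.+1 * point F m :=
  (info_order k, sample_point alpha k).

Lemma sum_div_lt (k : mono m d) : k \in monos_le -> (\sum_(l < m) k l %/ #|F| < s.+1)%N.
Proof.
rewrite inE => k_le; rewrite -(@ltn_pmul2r #|F|) ?card_finField_gt0 //.
apply: leq_ltn_trans d_lt; rewrite big_distrl /=; apply: leq_trans k_le.
by apply: leq_sum => l _; apply: leq_divM.
Qed.

Lemma info_orderE (k : mono m d) l : k \in monos_le ->
  (val (info_order k) l : nat) = (k l %/ #|F|)%N.
Proof.
move=> k_le; have lt_sum := sum_div_lt k_le.
have lt_l l' : (k l' %/ #|F| < s.+1)%N.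
  by apply: leq_ltn_trans lt_sum; rewrite (bigD1 l') //= leq_addr.
rewrite val_insubd ifT ?ffunE ?inordK //.
by under eq_bigr => l' _ do rewrite ffunE inordK //.
Qed.

Lemma mult_enc_info_emb (c : {ffun mono m d -> F}) (k : mono m d) : k \in monos_le ->
  mult_enc s.+1 c (info_emb k) = sample alpha c k.
Proof.
move=> k_le; rewrite ffunE; apply: eq_bigr => e _; congr (_ * _).
by apply: eq_bigr => l _; rewrite /= info_orderE.
Qed.

Lemma info_emb_inj : injective alpha -> {in monos_le &, injective info_emb}.
Proof.
move=> alpha_inj k1 k2 k1_le k2_le [eq_order eq_point].
apply/ffunP => l; apply: val_inj => /=.
have eq_div : (k1 l %/ #|F| = k2 l %/ #|F|)%N by rewrite -!info_orderE // eq_order.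
have /ffunP/(_ l) := eq_point; rewrite !ffunE => /alpha_inj/(congr1 val) /= eq_mod.
by rewrite (divn_eq (k1 l) #|F|) (divn_eq (k2 l) #|F|) eq_div eq_mod.
Qed.

Lemma info_emb_mem (k : mono m d) : k \in monos_le -> info_emb k \in infoSet m s.+1 d alpha.
Proof.
move=> k_le; rewrite !inE; apply/existsP; exists [ffun l => modq (k l)].
rewrite /dj le_min; apply/andP; split; last by apply/eqP/ffunP => l; rewrite !ffunE.
apply/andP; split.
  rewrite lez_nat; under eq_bigr => l _ do rewrite ffunE.
  rewrite -[X in (_ <= X * _)%N]card_ord -sum_nat_const; apply: leq_sum => l _ /=.
  by rewrite -ltnS subn1 prednK ?card_finField_gt0 // ltn_pmod ?card_finField_gt0.
rewrite lerBrDr -PoszD lez_nat.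
have -> : jabs (info_order k) = (\sum_(l < m) k l %/ #|F|)%N.
  by apply: eq_bigr => l _; rewrite info_orderE.
under eq_bigr => l _ do rewrite ffunE.
rewrite big_distrl /= -big_split /=; move: k_le; rewrite inE; apply: leq_trans.
by apply: leq_sum => l _; rewrite addnC -divn_eq.
Qed.

Lemma infoSet_sub_emb x : x \in infoSet m s.+1 d alpha ->
  exists2 k, k \in monos_le & x = info_emb k.
Proof.
case: x => j P; rewrite !inE /= => /existsP[i /andP[le_i /eqP ->]].
move: le_i; rewrite /dj le_min => /andP[_]; rewrite lerBrDr -PoszD lez_nat => le_i.
have le_l l : (val j l * #|F| + i l <= d)%N.
  apply: leq_trans le_i; rewrite addnC /jabs; apply: leq_add.
    by rewrite (bigD1 l) //= leq_addr.
  by rewrite leq_mul2r (bigD1 l) //= leq_addr orbT.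
pose k : mono m d := [ffun l => inord (val j l * #|F| + i l)].
have kE l : (k l : nat) = (val j l * #|F| + i l)%N by rewrite ffunE inordK // ltnS.
clearbody k.
have k_le : k \in monos_le.
  rewrite inE; apply: leq_trans le_i; rewrite /mdeg (eq_bigr _ (fun l _ => kE l)).
  by rewrite big_split /= addnC big_distrl.
exists k => //; congr (_, _).
  apply/val_inj/ffunP => l; apply: val_inj.
  by rewrite /= info_orderE // kE divnMDl ?card_finField_gt0 // divn_small ?addn0.
apply/ffunP => l; rewrite !ffunE; congr (alpha _); apply: val_inj.
by rewrite /= kE modnMDl modn_small.
Qed.

Lemma infoSetE : infoSet m s.+1 d alpha = info_emb @: monos_le.
Proof.
apply/setP => x; apply/idP/imsetP => [/infoSet_sub_emb [k]|[k k_le ->]]; first by exists k.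
exact: info_emb_mem.
Qed.

End InformationSet.

Theorem mainTheorem6 (F : finFieldType) (m s d : nat) (alpha : 'I_#|F| -> F) :
  (0 < m)%N -> (0 < s)%N -> (d < s * #|F|)%N -> bijective alpha ->
  let I := infoSet m s d alpha in
  [/\ (* restriction to I is injective on Mult^s_d *)
      {in MultCode F m s d &, forall c1 c2 : word F m s,
          (forall x, x \in I -> c1 x = c2 x) -> c1 = c2},
      (* and surjective onto F^I *)
      (forall v : Sidx m s * point F m -> F,
          exists2 c, c \in MultCode F m s d & forall x, x \in I -> c x = v x)
    & #|I| = 'C(m + d, m)].
Proof.
case: s => [//|s] _ _ d_lt /bij_inj alpha_inj I.
have IE : I = info_emb s alpha @: monos_le m d by rewrite /I infoSetE.
split.
- move=> _ _ /imsetP[c1 _ ->] /imsetP[c2 _ ->] eq_I.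
  apply/ffunP => x; rewrite !ffunE; apply/eq_hasse_eval/(sample_inj alpha_inj) => k k_le.
  by rewrite -!(mult_enc_info_emb alpha d_lt) //; apply: eq_I; rewrite IE imset_f.
- move=> v.
  have [c sample_c] := sample_surj alpha_inj (fun k : mono m d => v (info_emb s alpha k)).
  exists (mult_enc s.+1 c); first exact: imset_f.
  by move=> x; rewrite IE => /imsetP[k k_le ->]; rewrite mult_enc_info_emb // sample_c.
- by rewrite IE card_in_imset ?card_monos_le //; apply: info_emb_inj.
Qed.
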